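(* Let $S$ be a square-free semigroup, $D$ a division ring, $(\alpha,\xi)\in Z^2(S,D^* )$ a normal 2-cocycle and $R=D^{\alpha}_{\xi}S$. Let $\Phi:\mathrm{Out}\,R\to\mathrm{Aut}(S)$ be the homomorphism described below. Then $\mathrm{Im}\,\Phi=\mathrm{Stab}_{[\alpha,\xi]}(\mathrm{Aut}\,S)=\{\phi\in\mathrm{Aut}(S):[\alpha,\xi]=[\alpha^{\phi},\xi^{\phi}]\}$.
   Context: $D$ is a division ring, $D^*$ its group of units, $\mathrm{Aut}(D)$ its ring automorphism group, $\rho_d(x)=dxd^{-1}$. A square-free semigroup is a semigroup $S$ (product $s\cdot t$) with zero $\theta$ and a finite set $E\subseteq S$ of nonzero pairwise orthogonal idempotents with $S=\bigcup_{e,f\in E}e\cdot S\cdot f$ and $|e\cdot S\cdot f\setminus\{\theta\}|\le 1$; $S^*=S\setminus\{\theta\}$, each $s\in S^*$ equals $e\cdot s\cdot f$ for unique $e,f\in E$; $\mathrm{Aut}(S)$ is the semigroup automorphism group. $S^{<0>}=E$, $S^{<n>}=\{(s_1,\dots,s_n)\in S^n:s_1\cdots s_n\ne\theta\}$, $F^n(S,G)$ the group of functions $S^{<n>}\to G$; $\alpha_s=\alpha(s)$, $\mu_e=\mu(e)$. A 2-cocycle is $(\alpha,\xi)\in F^1(S,\mathrm{Aut}(D))\times F^2(S,D^* )$ with $\alpha_s(\xi(t,u))\xi(s,t\cdot u)=\xi(s,t)\xi(s\cdot t,u)$ on $S^{<3>}$ and $\alpha_s\circ\alpha_t=\rho_{\xi(s,t)}\circ\alpha_{s\cdot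 t}$ on $S^{<2>}$; $Z^2(S,D^* )$ is their set; normal means $\alpha_e=1_D$, $\xi(e,e)=1$ for $e\in E$. $F^0(S,\mathrm{Aut}(D))\ltimes F^1(S,D^* )$ acts on $Z^2(S,D^* )$ by $(\mu,\eta)*(\alpha,\xi)=(\beta,\zeta)$ where for $s=e\cdot s\cdot f$, $t=f\cdot t\cdot g$, $s\cdot t\ne\theta$: $\mu_e\circ\beta_s\circ\mu_f^{-1}=\rho_{\eta(s)}\circ\alpha_s$ and $\mu_e(\zeta(s,t))=\eta(s)\alpha_s(\eta(t))\xi(s,t)\eta(s\cdot t)^{-1}$; $[\alpha,\xi]$ denotes the orbit (thin 2-cohomology class). For $\phi\in\mathrm{Aut}(S)$, $\alpha^{\phi}_s=\alpha_{\phi(s)}$, $\xi^{\phi}(s,t)=\xi(\phi(s),\phi(t))$. $D^{\alpha}_{\xi}S$ is the left $D$-vector space with basis $S^*$, multiplication extended by distributivity from $(d_1s)(d_2t)=d_1\alpha_s(d_2)\xi(s,t)(s\cdot t)$ if $s\cdot t\ne\theta$, $0$ otherwise. $\mathrm{Out}\,R=\mathrm{Aut}\,R/\mathrm{Inn}\,R$. The map $\Phi$: let $\mathrm{Aut}_0R=\{\gamma\in\mathrm{Aut}\,R:\gamma(E)=E\}$. Every coset $(\mathrm{Inn}\,R)\gamma$ contains some $\gamma_0\in\mathrm{Aut}_0R$, and every $\gamma_0\in\mathrm{Aut}_0R$ has the form $\gamma_0(ds)=\mu_e(d)\eta(s)\phi(s)$ ($d\in D$, $s=e\cdot s\in S^*$)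 for some $\mu\in F^0(S,\mathrm{Aut}(D))$, $\eta\in F^1(S,D^* )$, $\phi\in\mathrm{Aut}(S)$, with $\phi$ depending only on the coset; $\Phi((\mathrm{Inn}\,R)\gamma_0)=\phi$ is a group homomorphism. *)

From HB Require Import structures.
From mathcomp Require Import all_boot all_order all_algebra.
Set Implicit Arguments. Unset Strict Implicit. Unset Printing Implicit Defensive.
Import GRing.Theory.
Local Open Scope ring_scope.

Section CrossedSemigroupRing.
Variables (D : unitRingType) (S : finType) (mul : S -> S -> S) (theta : S)
          (E : {set S}).

Definition square_free : Prop :=
  associative mul /\
  (forall s, mul theta s = theta /\ mul s theta = theta) /\
  (forall e, e \in E -> e != theta /\ mul e e = e) /\
  (forall e f, e \in E -> f \in E -> e != f -> mul e f = theta) /\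
  (forall s, exists e f x, [/\ e \in E, f \in E & s = mul (mul e x) f]) /\
  (forall e f x y, e \in E -> f \in E ->
      mul (mul e x) f != theta -> mul (mul e y) f != theta ->
      mul (mul e x) f = mul (mul e y) f).

Definition isAutS (phi : S -> S) : Prop :=
  bijective phi /\ forall s t, phi (mul s t) = mul (phi s) (phi t).

Definition isAutD (a : D -> D) : Prop :=
  (forall x y, a (x + y) = a x + a y) /\ (forall x y, a (x * y) = a x * a y) /\
  a 1 = 1 /\ bijective a.

Definition rho (d : D) (x : D) : D := d * x * d^-1.

(* (alpha, xi) in Z^2(S, D^* ) ; functions are total, constrained on S^<n> *)
Definition is_cocycle (alpha : S -> D -> D) (xi : S -> S -> D) : Prop :=
  (forall s, s != theta -> isAutD (alpha s)) /\
  (forall s t, mul s t != theta -> xi s t \is a GRing.unit) /\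
  (forall s t u, mul (mul s t) u != theta ->
      alpha s (xi t u) * xi s (mul t u) = xi s t * xi (mul s t) u) /\
  (forall s t, mul s t != theta -> forall x,
      alpha s (alpha t x) = rho (xi s t) (alpha (mul s t) x)).

Definition is_normal (alpha : S -> D -> D) (xi : S -> S -> D) : Prop :=
  forall e, e \in E -> (forall x, alpha e x = x) /\ xi e e = 1.

Definition isF0 (mu : S -> D -> D) : Prop := forall e, e \in E -> isAutD (mu e).
Definition isF1 (eta : S -> D) : Prop :=
  forall s, s != theta -> eta s \is a GRing.unit.

Definition act_rel (mu : S -> D -> D) (eta : S -> D)
    (alpha : S -> D -> D) (xi : S -> S -> D)
    (beta : S -> D -> D) (zeta : S -> S -> D) : Prop :=
  (forall s e f, e \in E -> f \in E -> s != theta -> s = mul (mul e s) f ->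
     forall y, mu e (beta s y) = rho (eta s) (alpha s (mu f y))) /\
  (forall s t e f g, e \in E -> f \in E -> g \in E ->
     s = mul (mul e s) f -> t = mul (mul f t) g -> mul s t != theta ->
     mu e (zeta s t) = eta s * alpha s (eta t) * xi s t * (eta (mul s t))^-1).

Definition same_class (alpha : S -> D -> D) (xi : S -> S -> D) (phi : S -> S)
  : Prop :=
  exists mu eta, [/\ isF0 mu, isF1 eta &
    act_rel mu eta alpha xi (fun s => alpha (phi s))
                            (fun s t => xi (phi s) (phi t))].

Definition Stab (alpha : S -> D -> D) (xi : S -> S -> D) (phi : S -> S) : Prop :=
  isAutS phi /\ same_class alpha xi phi.

(* The ring R = D^alpha_xi S: elements are functions S -> D vanishing at theta
   (coordinates in the basis S^* ). *)
Section Ring.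
Variables (alpha : S -> D -> D) (xi : S -> S -> D).

Definition inR (x : {ffun S -> D}) : bool := x theta == 0.
Definition addR (x y : {ffun S -> D}) : {ffun S -> D} := [ffun u => x u + y u].
Definition mulR (x y : {ffun S -> D}) : {ffun S -> D} :=
  [ffun u => if u == theta then 0 else
     \sum_(s : S) \sum_(t : S)
       (if [&& s != theta, t != theta & mul s t == u]
        then x s * alpha s (y t) * xi s t else 0)].
Definition bvec (d : D) (s : S) : {ffun S -> D} :=
  [ffun u => if u == s then d else 0].

Definition isRingAut (g : {ffun S -> D} -> {ffun S -> D}) : Prop :=
  (forall x, inR x -> inR (g x)) /\
  (forall x y, inR x -> inR y -> g (addR x y) = addR (g x) (g y)) /\
  (forall x y, inR x -> inR y -> g (mulR x y) = mulR (g x) (g y)) /\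
  (forall x y, inR x -> inR y -> g x = g y -> x = y) /\
  (forall y, inR y -> exists x, inR x /\ g x = y).

Definition isOneR (w : {ffun S -> D}) : Prop :=
  inR w /\ forall x, inR x -> mulR w x = x /\ mulR x w = x.

Definition isInner (i : {ffun S -> D} -> {ffun S -> D}) : Prop :=
  exists u v, [/\ inR u, inR v, isOneR (mulR u v), isOneR (mulR v u) &
    forall x, inR x -> i x = mulR (mulR u x) v].

Definition inAut0 (g : {ffun S -> D} -> {ffun S -> D}) : Prop :=
  isRingAut g /\
  (forall e, e \in E -> exists f, f \in E /\ g (bvec 1 e) = bvec 1 f) /\
  (forall f, f \in E -> exists e, e \in E /\ g (bvec 1 e) = bvec 1 f).

(* phi is the image under Phi of the class (Inn R) gamma of some automorphism
   gamma: the coset contains gamma0 in Aut_0 R with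
   gamma0(d s) = mu_e(d) eta(s) phi(s). *)
Definition ImPhi (phi : S -> S) : Prop :=
  exists gamma, isRingAut gamma /\
  exists gamma0, [/\ inAut0 gamma0,
    (exists i, isInner i /\ forall x, inR x -> gamma0 x = i (gamma x)) &
    exists mu eta, [/\ isF0 mu, isF1 eta, isAutS phi &
      forall d s e, s != theta -> e \in E -> s = mul e s ->
        gamma0 (bvec d s) = bvec (mu e d * eta s) (phi s)]].
End Ring.
End CrossedSemigroupRing.

From mathcomp Require Import all_boot all_order all_algebra.
From Stdlib Require Import ClassicalEpsilon.
Set Implicit Arguments. Unset Strict Implicit. Unset Printing Implicit Defensive.
Import GRing.Theory.

(* An automorphism of R = D^alpha_xi S that permutes E acts on the basis as
   d s |-> mu_e(d) eta(s) phi(s), with e the left idempotent of s.  Being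
   multiplicative on basis elements is an identity [twist_hom] between
   (mu, eta, phi) and the cocycle; inverting mu and setting
   eta' = mu^-1(eta^-1) turns it into the statement that (mu^-1, eta')
   carries (alpha, xi) to (alpha^phi, xi^phi).  The same inversion turns a
   witness of [alpha, xi] = [alpha^phi, xi^phi] back into data satisfying
   [twist_hom], whose basis map extends to an automorphism of R mapping E to E;
   it is its own representative in the coset of inner automorphisms because R
   has the identity element sum_(e in E) e. *)

Section SquareFreeSemigroup.
Variables (S : finType) (mul : S -> S -> S) (theta : S) (E : {set S}).
Hypothesis hS : square_free mul theta E.
Implicit Types (s t e f p : S).

Lemma mulSA : associative mul. Proof. by case: hS. Qed.
Lemma mul0S s : mul theta s = theta. Proof. by case: hS => _ [h _]; case: (h s). Qed.
Lemma mulS0 s : mul s theta = theta. Proof. by case: hS => _ [h _]; case: (h s). Qed.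
Lemma E_neq0 e : e \in E -> e != theta. Proof. by case: hS => _ [_ [h _]] /h []. Qed.
Lemma E_idem e : e \in E -> mul e e = e. Proof. by case: hS => _ [_ [h _]] /h []. Qed.
Lemma E_orth e f : e \in E -> f \in E -> e != f -> mul e f = theta.
Proof. by case: hS => _ [_ [_ [h _]]]; apply: h. Qed.

Lemma mulS_neq0l s t : mul s t != theta -> s != theta.
Proof. by apply: contra => /eqP ->; rewrite mul0S. Qed.
Lemma mulS_neq0r s t : mul s t != theta -> t != theta.
Proof. by apply: contra => /eqP ->; rewrite mulS0. Qed.

Lemma exists_lidem s : exists2 e, e \in E & mul e s = s.
Proof.
case: hS => _ [_ [_ [_ [h _]]]]; have [e [f [x [eE fE ->]]]] := h s.
by exists e => //; rewrite !mulSA E_idem.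
Qed.

Lemma exists_ridem s : exists2 f, f \in E & mul s f = s.
Proof.
case: hS => _ [_ [_ [_ [h _]]]]; have [e [f [x [eE fE ->]]]] := h s.
by exists f => //; rewrite -!mulSA E_idem.
Qed.

(* For [s != theta] these are the unique [e, f] in [E] with [s = e s f]; at
   [theta] they are junk. *)
Definition lidem s := odflt theta [pick e in E | mul e s == s].
Definition ridem s := odflt theta [pick f in E | mul s f == s].

Lemma lidemP s : lidem s \in E /\ mul (lidem s) s = s.
Proof.
rewrite /lidem; case: pickP => [e /andP [eE /eqP es] | none] //=.
by have [e eE es] := exists_lidem s; move: (none e); rewrite eE es eqxx.
Qed.

Lemma ridemP s : ridem s \in E /\ mul s (ridem s) = s.
Proof.
rewrite /ridem; case: pickP => [f /andP [fE /eqP sf] | none] //=.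
by have [f fE sf] := exists_ridem s; move: (none f); rewrite fE sf eqxx.
Qed.

Lemma lidem_in s : lidem s \in E. Proof. by case: (lidemP s). Qed.
Lemma ridem_in s : ridem s \in E. Proof. by case: (ridemP s). Qed.
Lemma mul_lidem s : mul (lidem s) s = s. Proof. by case: (lidemP s). Qed.
Lemma mul_ridem s : mul s (ridem s) = s. Proof. by case: (ridemP s). Qed.

Lemma lidem_unique e s : s != theta -> e \in E -> mul e s = s -> lidem s = e.
Proof.
move=> ns eE es; case: (eqVneq e (lidem s)) => // ne; case/eqP: ns.
by rewrite -es -(mul_lidem s) mulSA (E_orth eE (lidem_in s) ne) mul0S.
Qed.

Lemma ridem_unique f s : s != theta -> f \in E -> mul s f = s -> ridem s = f.
Proof.
move=> ns fE sf; case: (eqVneq (ridem s) f) => // ne; case/eqP: ns.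
by rewrite -sf -(mul_ridem s) -mulSA (E_orth (ridem_in s) fE ne) mulS0.
Qed.

Lemma E_mulS_id e s : e \in E -> mul e s != theta -> mul e s = s.
Proof.
move=> eE es; case: (eqVneq e (lidem s)) => [-> | ne]; first exact: mul_lidem.
by case/eqP: es; rewrite -(mul_lidem s) mulSA (E_orth eE (lidem_in s) ne) mul0S.
Qed.

Lemma mulS_E_id f s : f \in E -> mul s f != theta -> mul s f = s.
Proof.
move=> fE sf; case: (eqVneq (ridem s) f) => [<- | ne]; first exact: mul_ridem.
by case/eqP: sf; rewrite -(mul_ridem s) -mulSA (E_orth (ridem_in s) fE ne) mulS0.
Qed.

Lemma lidem_mul s t : mul s t != theta -> lidem (mul s t) = lidem s.
Proof. by move=> nst; apply: lidem_unique; rewrite ?lidem_in // mulSA mul_lidem. Qed.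

Lemma ridem_mul s t : mul s t != theta -> ridem (mul s t) = ridem t.
Proof. by move=> nst; apply: ridem_unique; rewrite ?ridem_in // -mulSA mul_ridem. Qed.

Lemma ridem_lidem s t : mul s t != theta -> ridem s = lidem t.
Proof.
move=> nst; case: (eqVneq (ridem s) (lidem t)) => // ne; case/eqP: nst.
rewrite -(mul_ridem s) -(mul_lidem t) -mulSA (mulSA (ridem s)).
by rewrite (E_orth (ridem_in s) (lidem_in t) ne) mul0S mulS0.
Qed.

Lemma lidem_E e : e \in E -> lidem e = e.
Proof. by move=> eE; apply: lidem_unique; rewrite ?E_idem ?E_neq0. Qed.

Lemma ridem_E e : e \in E -> ridem e = e.
Proof. by move=> eE; apply: ridem_unique; rewrite ?E_idem ?E_neq0. Qed.

Lemma lidem_ridem_of_decomp s e f : s != theta -> e \in E -> f \in E ->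
  s = mul (mul e s) f -> lidem s = e /\ ridem s = f.
Proof.
move=> ns eE fE def_s.
have es : mul e s != theta by apply: contra ns => /eqP es0; rewrite def_s es0 mul0S.
have es_id := E_mulS_id eE es.
by split; [apply: lidem_unique | apply: ridem_unique; rewrite // {2}def_s es_id].
Qed.

Lemma idem_in_E p : p != theta -> mul p p = p -> p \in E.
Proof.
move=> np pp; set e := lidem p; have eE : e \in E := lidem_in p.
have pe : p = mul (mul e p) e by rewrite mul_lidem /e -(@ridem_lidem p p) ?pp // mul_ridem.
have ee : e = mul (mul e e) e by rewrite !E_idem.
have [_ [_ [_ [_ [_ corner_uniq]]]]] := hS.
suff -> : p = e by [].
apply: (etrans pe); rewrite [RHS]ee; apply: corner_uniq => //.
  by rewrite -pe.
by rewrite -ee E_neq0.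
Qed.

Variable phi : S -> S.
Hypothesis hphi : isAutS mul phi.

Lemma phi_mul s t : phi (mul s t) = mul (phi s) (phi t). Proof. by case: hphi. Qed.

Lemma phi_inj : injective phi. Proof. by case: hphi => [[g /can_inj]]. Qed.

Lemma phi_theta : phi theta = theta.
Proof.
have [[g _ gK] _] := hphi.
by rewrite -[RHS](mul0S (phi theta)) -[X in mul X _](gK theta) -phi_mul mulS0.
Qed.

Lemma phi_neq0 s : (phi s != theta) = (s != theta).
Proof. by rewrite -[in LHS]phi_theta (inj_eq phi_inj). Qed.

Lemma phi_E e : (phi e \in E) = (e \in E).
Proof.
apply/idP/idP => eE.
  apply: idem_in_E; first by rewrite -phi_neq0 E_neq0.
  by apply: phi_inj; rewrite phi_mul E_idem.
by apply: idem_in_E; rewrite ?phi_neq0 ?E_neq0 // -phi_mul E_idem.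
Qed.

Lemma phi_ridem s : s != theta -> ridem (phi s) = phi (ridem s).
Proof.
by move=> ns; apply: ridem_unique; rewrite ?phi_neq0 ?phi_E ?ridem_in // -phi_mul mul_ridem.
Qed.
End SquareFreeSemigroup.

Local Open Scope ring_scope.

Section RingAutomorphisms.
Variable D : unitRingType.
Implicit Types (a b : D -> D) (x : D).

Lemma autD_add a : isAutD a -> {morph a : x y / x + y}. Proof. by case. Qed.
Lemma autD_mul a : isAutD a -> {morph a : x y / x * y}. Proof. by case=> _ []. Qed.
Lemma autD_1 a : isAutD a -> a 1 = 1. Proof. by case=> _ [_ []]. Qed.
Lemma autD_inj a : isAutD a -> injective a. Proof. by case=> _ [_ [_ /bij_inj]]. Qed.

Lemma autD_0 a : isAutD a -> a 0 = 0.
Proof. by move=> ha; apply: (@addrI _ (a 0)); rewrite -autD_add // !addr0. Qed.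

Lemma autD_unit a x : isAutD a -> x \is a GRing.unit -> a x \is a GRing.unit.
Proof.
move=> ha xu; apply/unitrP; exists (a x^-1).
by rewrite -!autD_mul // mulrV // mulVr // autD_1.
Qed.

Lemma autD_inv a x : isAutD a -> x \is a GRing.unit -> a x^-1 = (a x)^-1.
Proof.
move=> ha xu; apply: (mulrI (autD_unit ha xu)).
by rewrite -autD_mul // !mulrV ?autD_1 ?autD_unit.
Qed.

Lemma autD_can a b : isAutD a -> cancel a b -> cancel b a -> isAutD b.
Proof.
move=> ha ab ba; have ia := autD_inj ha.
split; [|split; [|split]].
- by move=> x y; apply: ia; rewrite (autD_add ha) !ba.
- by move=> x y; apply: ia; rewrite (autD_mul ha) !ba.
- by apply: ia; rewrite ba (autD_1 ha).
- by exists a.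
Qed.

Lemma autD_inverse_family (I : Type) (P : I -> Prop) (mu : I -> D -> D) :
  (forall i, P i -> isAutD (mu i)) ->
  exists nu, forall i, P i -> cancel (mu i) (nu i) /\ cancel (nu i) (mu i).
Proof.
move=> hmu; exists (fun i => epsilon (inhabits id)
                      (fun g => cancel (mu i) g /\ cancel g (mu i))).
move=> i /hmu [_ [_ [_ [g ag ga]]]].
apply: (epsilon_spec (inhabits id) (fun g => cancel (mu i) g /\ cancel g (mu i))).
by exists g.
Qed.
End RingAutomorphisms.

Lemma bvecE (D : unitRingType) (S : finType) (d : D) (s u : S) :
  bvec d s u = if u == s then d else 0.
Proof. by rewrite ffunE. Qed.

Lemma bvec_inj (D : unitRingType) (S : finType) (s : S) : injective (@bvec D S ^~ s).
Proof. by move=> a b /ffunP/(_ s); rewrite !bvecE eqxx. Qed.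

Lemma sum_pair1 (R : nmodType) (I J : finType) (F : I -> J -> R) i0 j0 :
  (forall i j, (i, j) != (i0, j0) -> F i j = 0) ->
  \sum_i \sum_j F i j = F i0 j0.
Proof.
move=> F0; rewrite pair_bigA (bigD1 (i0, j0)) //= big1 ?addr0 //.
by case=> i j /F0.
Qed.

Lemma inR_bvec (D : unitRingType) (S : finType) (theta : S) (d : D) (s : S) :
  s != theta -> inR theta (bvec d s).
Proof. by move=> ns; rewrite /inR bvecE (eq_sym theta) (negbTE ns). Qed.

Section CrossedSemigroupRing.
Variables (D : unitRingType) (S : finType) (mul : S -> S -> S) (theta : S)
          (E : {set S}).
Hypothesis hS : square_free mul theta E.
Variables (alpha : S -> D -> D) (xi : S -> S -> D).
Hypothesis hc : is_cocycle mul theta alpha xi.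
Hypothesis hn : is_normal E alpha xi.
Implicit Types (s t u e f : S) (x y : {ffun S -> D}).

Local Notation lidem := (lidem mul theta E).
Local Notation ridem := (ridem mul theta E).
Local Notation mulR := (mulR mul theta alpha xi).
Local Notation inR := (inR theta).

Lemma alpha_aut s : s != theta -> isAutD (alpha s). Proof. by case: hc => h _; apply: h. Qed.

Lemma xi_unit s t : mul s t != theta -> xi s t \is a GRing.unit.
Proof. by case: hc => _ [h _]; apply: h. Qed.

Lemma xi_cocycle s t u : mul (mul s t) u != theta ->
  alpha s (xi t u) * xi s (mul t u) = xi s t * xi (mul s t) u.
Proof. by case: hc => _ [_ [h _]]; apply: h. Qed.

Lemma alpha_E e d : e \in E -> alpha e d = d. Proof. by move=> /hn [h _]. Qed.
Lemma xi_E e : e \in E -> xi e e = 1. Proof. by move=> /hn [_ h]. Qed.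

Lemma xi_lidem s : s != theta -> xi (lidem s) s = 1.
Proof.
move=> ns; set e := lidem s; have eE : e \in E := lidem_in hS s.
have es : mul e s = s := mul_lidem hS s.
have u : xi e s \is a GRing.unit by apply: xi_unit; rewrite es.
have ees : mul (mul e e) s != theta by rewrite (E_idem hS eE) es.
have := xi_cocycle ees; rewrite alpha_E // (E_idem hS eE) es xi_E // mul1r.
by rewrite -{3}(mulr1 (xi e s)) => /(mulrI u).
Qed.

Lemma xi_ridem s : s != theta -> xi s (ridem s) = 1.
Proof.
move=> ns; set f := ridem s; have fE : f \in E := ridem_in hS s.
have sf : mul s f = s := mul_ridem hS s.
have u : xi s f \is a GRing.unit by apply: xi_unit; rewrite sf.
have sff : mul (mul s f) f != theta by rewrite !sf.
have := xi_cocycle sff; rewrite xi_E // (E_idem hS fE) sf (autD_1 (alpha_aut ns)) mul1r.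
by rewrite -{1}(mulr1 (xi s f)) => /(mulrI u).
Qed.

Lemma mulR_bvec a b s t : mul s t != theta ->
  mulR (bvec a s) (bvec b t) = bvec (a * alpha s b * xi s t) (mul s t).
Proof.
move=> nst; have ns := mulS_neq0l hS nst; have nt := mulS_neq0r hS nst.
apply/ffunP => u; rewrite /mulR !ffunE.
case: (eqVneq u theta) => [-> | _]; first by rewrite eq_sym (negbTE nst).
rewrite (sum_pair1 (i0 := s) (j0 := t)) => [|s' t' ne]; last first.
  rewrite !bvecE; case: (eqVneq s' s) => [es|]; last by rewrite !mul0r if_same.
  case: (eqVneq t' t) => [et|]; first by move: ne; rewrite es et eqxx.
  by rewrite es (autD_0 (alpha_aut ns)) mulr0 mul0r if_same.
by rewrite ns nt /= !bvecE !eqxx eq_sym.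
Qed.

Definition oneR : {ffun S -> D} := [ffun u => if u \in E then 1 else 0].

Lemma inR_oneR : inR oneR.
Proof. by rewrite /inR ffunE; case: ifP => // /(E_neq0 hS); rewrite eqxx. Qed.

Lemma mulR_1x x : inR x -> mulR oneR x = x.
Proof.
move=> /eqP x0; apply/ffunP => u; rewrite /mulR !ffunE.
case: (eqVneq u theta) => [-> // | nzu]; set e := lidem u.
rewrite (sum_pair1 (i0 := e) (j0 := u)) => [|s t ne]; last first.
  case: and3P => // -[ns nt /eqP st]; rewrite ffunE; case: ifP => sE; last by rewrite !mul0r.
  have tu : t = u by rewrite -st (E_mulS_id hS) // st.
  have se : s = e by rewrite /e -st (lidem_mul hS) ?st // (lidem_E hS sE).
  by move: ne; rewrite se tu eqxx.
have eE : e \in E := lidem_in hS u.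
by rewrite ffunE eE (E_neq0 hS eE) nzu (mul_lidem hS) eqxx mul1r alpha_E // xi_lidem // mulr1.
Qed.

Lemma mulR_x1 x : inR x -> mulR x oneR = x.
Proof.
move=> /eqP x0; apply/ffunP => u; rewrite /mulR !ffunE.
case: (eqVneq u theta) => [-> // | nzu]; set f := ridem u.
rewrite (sum_pair1 (i0 := u) (j0 := f)) => [|s t ne]; last first.
  case: and3P => // -[ns nt /eqP st]; rewrite ffunE; case: ifP => tE; last first.
    by rewrite (autD_0 (alpha_aut ns)) mulr0 mul0r.
  have su : s = u by rewrite -st (mulS_E_id hS) // st.
  have tf : t = f by rewrite /f -st (ridem_mul hS) ?st // (ridem_E hS tE).
  by move: ne; rewrite su tf eqxx.
have fE : f \in E := ridem_in hS u.
by rewrite ffunE fE (E_neq0 hS fE) nzu (mul_ridem hS) eqxx (autD_1 (alpha_aut nzu)) xi_ridem // !mulr1.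
Qed.

Lemma isOneR_oneR : isOneR mul theta alpha xi oneR.
Proof. by split=> [|x xR]; rewrite ?inR_oneR ?mulR_1x ?mulR_x1. Qed.

Lemma isInner_id : isInner mul theta alpha xi id.
Proof.
exists oneR, oneR; split=> [||||x xR]; rewrite ?mulR_1x ?mulR_x1 ?inR_oneR //.
all: exact: isOneR_oneR.
Qed.
End CrossedSemigroupRing.

Section TwistedMap.
Variables (D : unitRingType) (S : finType) (mul : S -> S -> S) (theta : S)
          (E : {set S}).
Hypothesis hS : square_free mul theta E.
Variables (alpha : S -> D -> D) (xi : S -> S -> D).
Hypothesis hc : is_cocycle mul theta alpha xi.
Variable phi : S -> S.
Hypothesis hphi : isAutS mul phi.
Variables (mu nu : S -> D -> D) (eta : S -> D).
Hypothesis hmu : isF0 E mu.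
Hypothesis muK : forall e, e \in E -> cancel (mu e) (nu e) /\ cancel (nu e) (mu e).
Hypothesis heta : isF1 theta eta.
Implicit Types (s t u e : S) (d : D) (x y : {ffun S -> D}).

Local Notation lidem := (lidem mul theta E).
Local Notation ridem := (ridem mul theta E).
Local Notation mulR := (mulR mul theta alpha xi).
Local Notation inR := (inR theta).

(* Multiplicativity of d s |-> mu_(lidem s)(d) eta(s) phi(s) on (1 s) (d t). *)
Definition twist_hom : Prop := forall d s t, mul s t != theta ->
  mu (lidem s) (alpha s d * xi s t) * eta (mul s t) =
  eta s * alpha (phi s) (mu (lidem t) d * eta t) * xi (phi s) (phi t).

Lemma twist_hom_of_basis (g : {ffun S -> D} -> {ffun S -> D}) :
  (forall d s, s != theta -> g (bvec d s) = bvec (mu (lidem s) d * eta s) (phi s)) ->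
  (forall x y, inR x -> inR y -> g (mulR x y) = mulR (g x) (g y)) ->
  twist_hom.
Proof.
move=> g_bvec g_mul d s t nst.
have ns := mulS_neq0l hS nst; have nt := mulS_neq0r hS nst.
have nphi : mul (phi s) (phi t) != theta by rewrite -(phi_mul hphi) (phi_neq0 hS hphi).
have := g_mul _ _ (inR_bvec 1 ns) (inR_bvec d nt).
rewrite (mulR_bvec hS hc) // !g_bvec // (mulR_bvec hS hc) // (lidem_mul hS nst).
by rewrite (autD_1 (hmu (lidem_in hS s))) !mul1r -(phi_mul hphi) => /bvec_inj.
Qed.

Definition inv_eta s : D := nu (lidem s) (eta s)^-1.

Lemma isF0_inverse : isF0 E nu.
Proof. by move=> e eE; have [? ?] := muK eE; apply: autD_can (hmu eE) _ _. Qed.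

Lemma mu_inv_eta s : mu (lidem s) (inv_eta s) = (eta s)^-1.
Proof. by have [_ ->] := muK (lidem_in hS s). Qed.

Lemma isF1_inv_eta : isF1 theta inv_eta.
Proof.
by move=> s ns; apply: (autD_unit (isF0_inverse (lidem_in hS s))); rewrite unitrV heta.
Qed.

Variable psi : S -> S.
Hypotheses (phiK : cancel phi psi) (psiK : cancel psi phi).

Definition twist x : {ffun S -> D} :=
  [ffun u => if u == theta then 0 else mu (lidem (psi u)) (x (psi u)) * eta (psi u)].

Lemma psi_neq0 u : (psi u != theta) = (u != theta).
Proof. by rewrite -(phi_neq0 hS hphi) psiK. Qed.

Lemma twist_bvec d s : s != theta ->
  twist (bvec d s) = bvec (mu (lidem s) d * eta s) (phi s).
Proof.
move=> ns; have nps : phi s != theta by rewrite (phi_neq0 hS hphi).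
apply/ffunP => u; rewrite !ffunE.
have [-> | _] := eqVneq u theta; first by rewrite (eq_sym theta) (negbTE nps).
rewrite (can2_eq psiK phiK); case: eqP => [-> | _]; first by rewrite phiK.
by rewrite (autD_0 (hmu (lidem_in hS _))) mul0r.
Qed.

Lemma twist_mulR x y : twist_hom -> twist (mulR x y) = mulR (twist x) (twist y).
Proof.
move=> htw; apply/ffunP => u; rewrite !ffunE.
have [// | nzu] := eqVneq u theta.
have muA := hmu (lidem_in hS (psi u)).
have npu : psi u != theta by rewrite psi_neq0.
rewrite (negbTE npu) (big_morph _ (autD_add muA) (autD_0 muA)) mulr_suml.
rewrite [RHS](reindex_inj (phi_inj hphi)); apply: eq_bigr => s _.
rewrite (big_morph _ (autD_add muA) (autD_0 muA)) mulr_suml.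
rewrite [RHS](reindex_inj (phi_inj hphi)); apply: eq_bigr => t _.
rewrite !(phi_neq0 hS hphi) -(phi_mul hphi) (can2_eq phiK psiK).
case: and3P => [[ns nt /eqP st] | _]; last by rewrite (autD_0 muA) mul0r.
have nps : phi s != theta by rewrite (phi_neq0 hS hphi).
have npt : phi t != theta by rewrite (phi_neq0 hS hphi).
have nst : mul s t != theta by rewrite st.
rewrite !ffunE (negbTE nps) (negbTE npt) !phiK -st (lidem_mul hS nst).
rewrite -[x s * _ * _]mulrA (autD_mul (hmu (lidem_in hS s))) -mulrA htw //.
by rewrite !mulrA.
Qed.

Lemma twist_isRingAut : twist_hom -> isRingAut mul theta alpha xi twist.
Proof.
move=> htw; split; first by move=> x _; rewrite /inR ffunE eqxx.
split.
  move=> x y _ _; apply/ffunP => u; rewrite !ffunE.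
  have [_ | _] := eqVneq u theta; first by rewrite addr0.
  by rewrite (autD_add (hmu (lidem_in hS _))) mulrDl.
split; first by move=> x y _ _; apply: twist_mulR.
split.
  move=> x y /eqP x0 /eqP y0 /ffunP xy; apply/ffunP => s.
  have [-> | ns] := eqVneq s theta; first by rewrite x0 y0.
  have nps : phi s != theta by rewrite (phi_neq0 hS hphi).
  move: (xy (phi s)); rewrite !ffunE (negbTE nps) phiK.
  by move/(mulIr (heta ns))/(autD_inj (hmu (lidem_in hS s))).
move=> y /eqP y0.
exists [ffun s => if s == theta then 0 else nu (lidem s) (y (phi s) * (eta s)^-1)].
split; first by rewrite /inR ffunE eqxx.
apply/ffunP => u; rewrite !ffunE.
have [-> // | nzu] := eqVneq u theta.
have npu : psi u != theta by rewrite psi_neq0.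
have [_ nuK] := muK (lidem_in hS (psi u)).
by rewrite (negbTE npu) nuK psiK mulrVK ?heta.
Qed.

Hypothesis hn : is_normal E alpha xi.
Hypothesis htw : twist_hom.

Lemma twist_hom_eta_E e : e \in E -> eta e = 1.
Proof.
move=> eE; have ne := E_neq0 hS eE; have ee := E_idem hS eE.
have nee : mul e e != theta by rewrite ee.
have phieE : phi e \in E by rewrite (phi_E hS hphi).
have := htw 1 nee; rewrite ee (lidem_E hS eE) !(alpha_E hn) // !(xi_E hn) //.
by rewrite !mul1r (autD_1 (hmu eE)) mul1r mulr1 -{1}(mul1r (eta e)) => /(mulIr (heta ne)).
Qed.

Lemma twist_hom_alpha s d : s != theta ->
  mu (lidem s) (alpha s d) = eta s * alpha (phi s) (mu (ridem s) d) * (eta s)^-1.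
Proof.
move=> ns; have fE := ridem_in hS s.
have nsf : mul s (ridem s) != theta by rewrite (mul_ridem hS).
have nps : phi s != theta by rewrite (phi_neq0 hS hphi).
have := htw d nsf; rewrite (xi_ridem hS hc hn ns) (mul_ridem hS) (lidem_E hS fE).
rewrite (twist_hom_eta_E fE) -(phi_ridem hS hphi ns) (xi_ridem hS hc hn nps) !mulr1.
by move=> <-; rewrite mulrK ?heta.
Qed.

Lemma twist_hom_xi s t : mul s t != theta ->
  mu (lidem s) (xi s t) * eta (mul s t) = eta s * alpha (phi s) (eta t) * xi (phi s) (phi t).
Proof.
move=> nst; have := htw 1 nst.
by rewrite (autD_1 (alpha_aut hc (mulS_neq0l hS nst))) (autD_1 (hmu (lidem_in hS t))) !mul1r.
Qed.

Lemma same_class_of_twist_hom : same_class mul theta E alpha xi phi.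
Proof.
exists nu, inv_eta; split; [exact: isF0_inverse | exact: isF1_inv_eta | split].
- move=> s e f eE fE ns def_s y.
  have [<- <-] := lidem_ridem_of_decomp hS ns eE fE def_s.
  have muA := hmu (lidem_in hS s); have [_ nuK] := muK (lidem_in hS s).
  apply: (autD_inj muA); rewrite nuK /rho !(autD_mul muA) (autD_inv muA) ?isF1_inv_eta //.
  rewrite mu_inv_eta invrK twist_hom_alpha //; have [_ ->] := muK (ridem_in hS s).
  by rewrite -!mulrA mulKr ?heta // mulVr ?heta // mulr1.
- move=> s t e f g eE fE gE def_s _ nst; have ns := mulS_neq0l hS nst.
  have [<- _] := lidem_ridem_of_decomp hS ns eE fE def_s.
  have muA := hmu (lidem_in hS s); have [_ nuK] := muK (lidem_in hS s).
  have aA : isAutD (alpha (phi s)) by apply: (alpha_aut hc); rewrite (phi_neq0 hS hphi).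
  apply: (autD_inj muA); rewrite nuK !(autD_mul muA) (autD_inv muA) ?isF1_inv_eta //.
  have -> : mu (lidem s) (inv_eta (mul s t)) = (eta (mul s t))^-1.
    by rewrite -(lidem_mul hS nst) mu_inv_eta.
  rewrite invrK mu_inv_eta -mulrA twist_hom_xi // twist_hom_alpha //.
  rewrite (ridem_lidem hS nst) mu_inv_eta -!mulrA !mulKr ?heta //.
  by rewrite mulrA -(autD_mul aA) mulVr ?heta ?(mulS_neq0r hS nst) // (autD_1 aA) mul1r.
Qed.

Lemma ImPhi_of_twist_hom : ImPhi mul theta E alpha xi phi.
Proof.
have twist_E e : e \in E -> twist (bvec 1 e) = bvec 1 (phi e).
  move=> eE; rewrite twist_bvec ?(E_neq0 hS eE) // (lidem_E hS eE).
  by rewrite (autD_1 (hmu eE)) twist_hom_eta_E // mulr1.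
have tw_aut := twist_isRingAut htw.
exists twist; split => //; exists twist; split.
- split=> //; split=> [e eE | f fE].
    by exists (phi e); rewrite (phi_E hS hphi) twist_E.
  have psi_fE : psi f \in E by rewrite -(phi_E hS hphi) psiK.
  by exists (psi f); rewrite twist_E // psiK.
- by exists id; split=> //; apply: (isInner_id hS hc hn).
- exists mu, eta; split=> // d s e ns eE es; rewrite twist_bvec //.
  by rewrite (lidem_unique hS ns eE (esym es)).
Qed.
End TwistedMap.

Section TwistHomOfAction.
Variables (D : unitRingType) (S : finType) (mul : S -> S -> S) (theta : S)
          (E : {set S}).
Hypothesis hS : square_free mul theta E.
Variables (alpha : S -> D -> D) (xi : S -> S -> D).
Hypothesis hc : is_cocycle mul theta alpha xi.
Variable phi : S -> S.
Variables (mu nu : S -> D -> D) (eta : S -> D).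
Hypothesis hmu : isF0 E mu.
Hypothesis muK : forall e, e \in E -> cancel (mu e) (nu e) /\ cancel (nu e) (mu e).
Hypothesis heta : isF1 theta eta.
Hypothesis hact : act_rel mul theta E mu eta alpha xi
  (fun s => alpha (phi s)) (fun s t => xi (phi s) (phi t)).
Implicit Types (s t : S) (d : D).

Local Notation lidem := (lidem mul theta E).
Local Notation ridem := (ridem mul theta E).

Lemma act_alpha s d : s != theta ->
  mu (lidem s) (alpha (phi s) d) = rho (eta s) (alpha s (mu (ridem s) d)).
Proof.
move=> ns; case: hact => act_a _; apply: act_a; rewrite ?(lidem_in hS) ?(ridem_in hS) //.
by rewrite (mul_lidem hS) (mul_ridem hS).
Qed.

Lemma act_xi s t : mul s t != theta ->
  mu (lidem s) (xi (phi s) (phi t)) =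
  eta s * alpha s (eta t) * xi s t * (eta (mul s t))^-1.
Proof.
move=> nst; case: hact => _ act_x.
apply: (act_x s t _ (ridem s) (ridem t)); rewrite ?(lidem_in hS) ?(ridem_in hS) //.
  by rewrite (mul_lidem hS) (mul_ridem hS).
by rewrite (ridem_lidem hS nst) (mul_lidem hS) (mul_ridem hS).
Qed.

Lemma twist_hom_of_act_rel :
  twist_hom mul theta E alpha xi phi nu (inv_eta mul theta E nu eta).
Proof.
move=> d s t nst; have ns := mulS_neq0l hS nst; have nt := mulS_neq0r hS nst.
have muA := hmu (lidem_in hS s); have [_ nuK] := muK (lidem_in hS s).
apply: (autD_inj muA); rewrite !(autD_mul muA) nuK.
rewrite -{1}(lidem_mul hS nst) !(mu_inv_eta hS eta muK) act_alpha // act_xi //.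
rewrite (ridem_lidem hS nst) (autD_mul (hmu (lidem_in hS t))) (mu_inv_eta hS eta muK).
have [_ ->] := muK (lidem_in hS t).
have aA := alpha_aut hc ns.
by rewrite /rho -!mulrA !mulKr ?heta // [RHS]mulrA -(autD_mul aA) mulrVK ?heta.
Qed.
End TwistHomOfAction.

Theorem mainTheorem6 (D : unitRingType)
  (hD : forall x : D, x != 0 -> x \is a GRing.unit)
  (S : finType) (mul : S -> S -> S) (theta : S) (E : {set S})
  (hS : square_free mul theta E)
  (alpha : S -> D -> D) (xi : S -> S -> D)
  (hc : is_cocycle mul theta alpha xi) (hn : is_normal E alpha xi)
  (phi : S -> S) :
  ImPhi mul theta E alpha xi phi <-> Stab mul theta E alpha xi phi.
Proof.
split.
- case=> _ [_ [gamma0 [[[_ [_ [gamma0_mul _]]] _] _ [mu [eta [hmu heta hphi gamma0_bvec]]]]]].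
  have [nu muK] := autD_inverse_family hmu.
  have htw : twist_hom mul theta E alpha xi phi mu eta.
    apply: (twist_hom_of_basis hS hc hphi hmu _ gamma0_mul) => d s ns.
    by apply: gamma0_bvec; rewrite ?(lidem_in hS) ?(mul_lidem hS).
  by split=> //; apply: (same_class_of_twist_hom hS hc hphi hmu muK heta hn htw).
- case=> hphi [mu [eta [hmu heta hact]]]; have [[psi phiK psiK] _] := hphi.
  have [nu muK] := autD_inverse_family hmu.
  have nuK e : e \in E -> cancel (nu e) (mu e) /\ cancel (mu e) (nu e).
    by move=> /muK [].
  apply: (ImPhi_of_twist_hom hS hc hphi (isF0_inverse hmu muK) nuK
            (isF1_inv_eta hS hmu muK heta) phiK psiK hn).
  exact: (twist_hom_of_act_rel hS hc hmu muK heta hact).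
Qed.
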